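(* For every behavior $r$, $\mathcal C\big(\partial_{\simeq}(\mathcal C(\partial_{\simeq} r))\big)\simeq\partial_{\simeq}(\mathcal C(\partial_{\simeq} r))$, where $\simeq$ is applied to sets of behaviors as defined below.
   Context: Let $\Sigma$ be a finite alphabet. Behaviors are the terms generated by $r,s ::= \phi \mid \varepsilon \mid x\ (x\in\Sigma) \mid r+s \mid r\cdot s \mid r^* \mid \mathrm{fork}(r)$. The concurrent part $\mathcal C(r)$ is the behavior defined by: $\mathcal C(\phi)=\phi$, $\mathcal C(\varepsilon)=\varepsilon$, $\mathcal C(x)=\phi$, $\mathcal C(r+s)=\mathcal C(r)+\mathcal C(s)$, $\mathcal C(r\cdot s)=\mathcal C(r)\cdot\mathcal C(s)$, $\mathcal C(r^* )=\mathcal C(r)^*$, $\mathcal C(\mathrm{fork}(r))=\mathrm{fork}(r)$; for a set $R$ of behaviors, $\mathcal C(R)=\{\mathcal C(r)\mid r\in R\}$. The derivative $\partial_x r$ of a behavior $r$ by $x\in\Sigma$ is the behavior defined by: $\partial_x\phi=\phi$, $\partial_x\varepsilon=\phi$, $\partial_x y=\varepsilon$ if $y=x$ and $\phi$ otherwise, $\partial_x(r+s)=\partial_x r+\partial_x s$, $\partial_x(r\cdot s)=\partial_x r\cdot s+\mathcal C(r)\cdot\partial_x s$, $\partial_x(r^* )=\partial_x r\cdot r^*$, $\partial_x(\mathrm{fork}(r))=\mathrm{fork}(\partial_x r)$; it is extended to words by $\partial_\varepsilon r=r$ and $\partial_{xw}r=\partial_w(\partial_x r)$. A descendant of $r$ is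 any behavior $\partial_w r$ with $w\in\Sigma^*$; $\partial r$ denotes the set of descendants of $r$, and for a set $R$, $\partial R=\bigcup_{r\in R}\partial r$. Similarity $\simeq$ is the smallest relation on behaviors that is reflexive, symmetric, transitive, closed under contexts (if $s\simeq t$ then $E[s]\simeq E[t]$ for every context $E ::= [\,] \mid E^* \mid E\cdot s \mid r\cdot E \mid E+s \mid r+E \mid \mathrm{fork}(E)$, where $E[t]$ replaces the hole by $t$), and contains the axioms $r+(s+t)\simeq(r+s)+t$, $r+s\simeq s+r$, $r+r\simeq r$, $r+\phi\simeq r$, $\phi+r\simeq r$, $\varepsilon\cdot r\simeq r$, $r\cdot\varepsilon\simeq r$, $\varepsilon^*\simeq\varepsilon$, $\mathrm{fork}(\varepsilon)\simeq\varepsilon$, $\phi\cdot r\simeq\phi$, $r\cdot\phi\simeq\phi$, $\phi^*\simeq\varepsilon$, $\mathrm{fork}(\phi)\simeq\phi$. For sets of behaviors, $R\simeq S$ iff every $r\in R$ is similar to some $s\in S$ and every $s\in S$ is similar to some $r\in R$. The set of dissimilar descendants $\partial_{\simeq} r$ is a set containing exactly one (arbitrarily chosen) representative of each $\simeq$-equivalence class of elements of $\partial r$; for a set $R$, $\partial_{\simeq}R$ is a set containing exactly one (arbitrarily chosen) representative of each $\simeq$-class of elements of $\partial R$. *)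

From mathcomp Require Import all_boot.
Set Implicit Arguments.
Unset Strict Implicit.
Unset Printing Implicit Defensive.

Section Behaviors.
Variable Sigma : finType.

Inductive behavior : Type :=
| Phi : behavior
| Eps : behavior
| Sym : Sigma -> behavior
| Plus : behavior -> behavior -> behavior
| Cat : behavior -> behavior -> behavior
| Star : behavior -> behavior
| Fork : behavior -> behavior.

Fixpoint conc (r : behavior) : behavior :=
  match r with
  | Phi => Phi
  | Eps => Eps
  | Sym _ => Phi
  | Plus r s => Plus (conc r) (conc s)
  | Cat r s => Cat (conc r) (conc s)
  | Star r => Star (conc r)
  | Fork r => Fork r
  end.

Fixpoint deriv (x : Sigma) (r : behavior) : behavior :=
  match r with
  | Phi => Phi
  | Eps => Phi
  | Sym y => if y == x then Eps else Phi
  | Plus r s => Plus (deriv x r) (deriv x s)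
  | Cat r s => Plus (Cat (deriv x r) s) (Cat (conc r) (deriv x s))
  | Star r => Cat (deriv x r) (Star r)
  | Fork r => Fork (deriv x r)
  end.

Fixpoint deriv_word (w : seq Sigma) (r : behavior) : behavior :=
  match w with
  | [::] => r
  | x :: w' => deriv_word w' (deriv x r)
  end.

Inductive context : Type :=
| Hole : context
| CStar : context -> context
| CCatL : context -> behavior -> context
| CCatR : behavior -> context -> context
| CPlusL : context -> behavior -> context
| CPlusR : behavior -> context -> context
| CFork : context -> context.

Fixpoint fill (E : context) (t : behavior) : behavior :=
  match E with
  | Hole => t
  | CStar E => Star (fill E t)
  | CCatL E s => Cat (fill E t) s
  | CCatR r E => Cat r (fill E t)
  | CPlusL E s => Plus (fill E t) s
  | CPlusR r E => Plus r (fill E t)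
  | CFork E => Fork (fill E t)
  end.

Inductive sim : behavior -> behavior -> Prop :=
| sim_refl r : sim r r
| sim_sym r s : sim r s -> sim s r
| sim_trans r s t : sim r s -> sim s t -> sim r t
| sim_ctx (E : context) s t : sim s t -> sim (fill E s) (fill E t)
| ax_plusA r s t : sim (Plus r (Plus s t)) (Plus (Plus r s) t)
| ax_plusC r s : sim (Plus r s) (Plus s r)
| ax_plusI r : sim (Plus r r) r
| ax_plus0r r : sim (Plus r Phi) r
| ax_plus0l r : sim (Plus Phi r) r
| ax_cat1l r : sim (Cat Eps r) r
| ax_cat1r r : sim (Cat r Eps) r
| ax_star1 : sim (Star Eps) Eps
| ax_fork1 : sim (Fork Eps) Eps
| ax_cat0l r : sim (Cat Phi r) Phi
| ax_cat0r r : sim (Cat r Phi) Phi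
| ax_star0 : sim (Star Phi) Eps
| ax_fork0 : sim (Fork Phi) Phi.

Definition bset := behavior -> Prop.

Definition single (r : behavior) : bset := fun s => s = r.

Definition conc_set (R : bset) : bset := fun s => exists2 r, R r & s = conc r.

Definition descendants (R : bset) : bset :=
  fun s => exists2 r, R r & exists w, s = deriv_word w r.

Definition sim_set (R S : bset) : Prop :=
  (forall r, R r -> exists2 s, S s & sim r s) /\
  (forall s, S s -> exists2 r, R r & sim r s).

(* D is a (valid choice of) set of dissimilar descendants of R:
   exactly one representative of each sim-class of elements of partial R. *)
Definition is_dissim_desc (R D : bset) : Prop :=
  (forall d, D d -> descendants R d) /\
  (forall t, descendants R t -> exists2 d, D d & sim t d) /\
  (forall d1 d2, D d1 -> D d2 -> sim d1 d2 -> d1 = d2).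

End Behaviors.

From mathcomp Require Import all_boot.

(* A behavior is concurrent when every letter occurs under a [Fork].  The
   concurrent part of any behavior is concurrent, concurrent behaviors are
   fixed by [conc], and derivatives preserve concurrency.  Hence every
   descendant of a set of concurrent parts is its own concurrent part, and
   taking concurrent parts of such a set changes nothing. *)

Section Concurrent.
Variable Sigma : finType.

Fixpoint concurrent (r : behavior Sigma) : Prop :=
  match r with
  | Phi | Eps | Fork _ => True
  | Sym _ => False
  | Plus r s | Cat r s => concurrent r /\ concurrent s
  | Star r => concurrent r
  end.

Lemma concurrent_conc (r : behavior Sigma) : concurrent (conc r).
Proof. by elim: r => //= *; split. Qed.

Lemma conc_id (r : behavior Sigma) : concurrent r -> conc r = r.
Proof.
elim: r => //= [r IHr s IHs | r IHr s IHs | r IHr].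
- by case=> /IHr -> /IHs ->.
- by case=> /IHr -> /IHs ->.
- by move/IHr ->.
Qed.

Lemma concurrent_deriv x (r : behavior Sigma) :
  concurrent r -> concurrent (deriv x r).
Proof.
elim: r => //= [r IHr s IHs | r IHr s IHs | r IHr] => [[/IHr ? /IHs ?]|[cr cs]|cr] //.
- by split; split; [exact: IHr | | exact: concurrent_conc | exact: IHs].
- by split => //; exact: IHr.
Qed.

Lemma concurrent_deriv_word w (r : behavior Sigma) :
  concurrent r -> concurrent (deriv_word w r).
Proof. by elim: w r => //= x w IHw r cr; apply/IHw/concurrent_deriv. Qed.

Lemma descendants_conc_set_concurrent (R : bset Sigma) t :
  descendants (conc_set R) t -> concurrent t.
Proof.
by case=> _ [r _ ->] [w ->]; apply/concurrent_deriv_word/concurrent_conc.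
Qed.

Lemma sim_set_conc_set_id (R : bset Sigma) :
  (forall r, R r -> conc r = r) -> sim_set (conc_set R) R.
Proof.
move=> concR; split.
- by move=> _ [r Rr ->]; exists r => //; rewrite concR //; exact: sim_refl.
- by move=> r Rr; exists r; [exists r; rewrite ?concR | exact: sim_refl].
Qed.

End Concurrent.

Theorem lemma10 (Sigma : finType) (r : behavior Sigma) (D1 D2 : bset Sigma) :
  is_dissim_desc (single r) D1 ->
  is_dissim_desc (conc_set D1) D2 ->
  sim_set (conc_set D2) D2.
Proof.
move=> _ [D2_desc _]; apply: sim_set_conc_set_id => d /D2_desc.
by move/descendants_conc_set_concurrent/conc_id.
Qed.
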